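(* Let $w_1, w_2 \geq 0$ with $w_1 + w_2 > 0$. Both for the class of sequential two-player weighted congestion games with affine costs, uniform cost functions and player weights $w_1,w_2$ (player 1 moving first), and for its subclass of network routing games, the price of anarchy (with respect to subgame-perfect equilibria) is equal to \begin{enumerate} \item[(a)] $1 + \frac{w_1}{w_1 + w_2}$ if $w_2 \leq w_1$; \item[(b)] $1 + \frac{2w_1w_2}{2w_1^2 + w_1w_2 + w_2^2}$ if $w_1 \leq w_2 \leq 2w_1$; \item[(c)] $1 + \frac{w_2}{2w_1+w_2}$ if $w_2 \geq 2w_1$. \end{enumerate} Moreover, in each case the value is attained by the following network routing game (all $\alpha=0$; $\beta$ given per arc): in case (a): arcs $a\to c$ ($\beta=w_2$), $b\to d$ ($\beta=w_1+w_2$), $a\to b$ ($\beta=0$), $b\to c$ ($\beta=w_2$), $c\to d$ ($\beta=0$), player 1 from $a$ to $c$, player 2 from $b$ to $d$; in case (b): arcs $a\to b$ ($0$), $b\to c$ ($w_1w_2$), $a\to c$ ($w_1^2+w_1w_2$), $c\to d$ ($w_2^2$), $d\to e$ ($0$), $c\to e$ ($0$), $a\to d$ ($(w_1+w_2)^2$), player 1 from $b$ to $e$, player 2 from $a$ to $d$; in case (c): arcs $a\to b$ ($w_2$), $b\to c$ ($0$), $a\to c$ ($w_1+w_2$), player 1 from $a$ to $b$, player 2 from $a$ to $c$.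
   Context: A weighted two-player congestion game with affine costs consists of a finite set $R$ of resources, coefficients $\alpha_r,\beta_r \geq 0$ for each $r\in R$, two players $i=1,2$ with weights $w_i\ge 0$, and for each player $i$ a nonempty finite set $\mathcal{A}_i \subseteq 2^R$ of actions. For an action profile $A=(A_1,A_2)$ the load of $r$ is $x_r(A)=\sum_{j:\, r\in A_j} w_j$. With uniform costs, player $i$ pays $C_i(A)=\sum_{r\in A_i}(\alpha_r+\beta_r x_r(A))$. The social cost is $C(A)=C_1(A)+C_2(A)$. In a network routing game, $R$ is the arc set of a directed graph, player $i$ has a source $s_i$ and sink $t_i$, and $\mathcal{A}_i$ is the set of arc sets of directed $s_i$–$t_i$ paths. In the sequential game, player 1 (weight $w_1$) chooses $A_1\in\mathcal{A}_1$ first, then player 2 (weight $w_2$), knowing $A_1$, chooses $A_2\in\mathcal{A}_2$. A subgame-perfect equilibrium consists of a function $A_1\mapsto A_2^*(A_1)$ with $C_2(A_1,A_2^*(A_1))\le C_2(A_1,A_2)$ for all $A_1,A_2$, and an action $A_1^*$ with $C_1(A_1^*,A_2^*(A_1^* ))\le C_1(A_1,A_2^*(A_1))$ for all $A_1$; its outcome is $(A_1^*,A_2^*(A_1^* ))$. The price of anarchy of an instance is the maximum over subgame-perfect equilibrium outcomes $A$ of $C(A)/\min_{A'}C(A')$; the price of anarchy of a class is the supremum over all instances (with positive optimal social cost). *)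

From mathcomp Require Import all_boot all_order all_algebra.
Set Implicit Arguments. Unset Strict Implicit. Unset Printing Implicit Defensive.
Import Order.TTheory GRing.Theory Num.Theory.
Local Open Scope ring_scope.

Section Game.
Variables (R : realFieldType) (T : finType).
Variables (alpha beta : T -> R) (w1 w2 : R).
Variables (S1 S2 : {set {set T}}).

Definition load (A1 A2 : {set T}) (r : T) : R :=
  (if r \in A1 then w1 else 0) + (if r \in A2 then w2 else 0).

Definition cost1 (A1 A2 : {set T}) : R :=
  \sum_(r in A1) (alpha r + beta r * load A1 A2 r).
Definition cost2 (A1 A2 : {set T}) : R :=
  \sum_(r in A2) (alpha r + beta r * load A1 A2 r).
Definition social_cost (A1 A2 : {set T}) : R := cost1 A1 A2 + cost2 A1 A2.

Definition is_opt_cost (v : R) : Prop :=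
  (exists2 A1, A1 \in S1 & exists2 A2, A2 \in S2 & social_cost A1 A2 = v) /\
  (forall A1 A2, A1 \in S1 -> A2 \in S2 -> v <= social_cost A1 A2).

(* (f, A1s) is a subgame-perfect equilibrium: f is player 2's strategy
   (a best response to every action of player 1), A1s is player 1's action *)
Definition is_spe (f : {set T} -> {set T}) (A1s : {set T}) : Prop :=
  (forall A1, A1 \in S1 -> f A1 \in S2 /\
     forall A2, A2 \in S2 -> cost2 A1 (f A1) <= cost2 A1 A2) /\
  A1s \in S1 /\
  (forall A1, A1 \in S1 -> cost1 A1s (f A1s) <= cost1 A1 (f A1)).

Definition is_spe_outcome (A1 A2 : {set T}) : Prop :=
  exists f, is_spe f A1 /\ A2 = f A1.

Definition spe_ratio (x : R) : Prop :=
  exists A1 A2 v, is_spe_outcome A1 A2 /\ is_opt_cost v /\ 0 < v /\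
                  x = social_cost A1 A2 / v.

Definition instance_poa (rho : R) : Prop :=
  spe_ratio rho /\ (forall x, spe_ratio x -> x <= rho).
End Game.

Section Network.
Variables (V T : finType) (tail head : T -> V).

Fixpoint is_walk (s t : V) (p : seq T) : bool :=
  match p with
  | [::] => s == t
  | e :: p' => (tail e == s) && is_walk (head e) t p'
  end.

Definition is_path (s t : V) (p : seq T) : bool :=
  is_walk s t p && uniq (s :: map head p).

Definition path_sets (s t : V) : {set {set T}} :=
  [set A : {set T} | [exists p : (#|T|).-tuple T, exists k : 'I_(#|T|).+1,
      is_path s t (take k p) && (A == [set e in take k p])]].
End Network.

Definition cg_ratio (R : realFieldType) (w1 w2 : R) (x : R) : Prop :=
  exists (T : finType) (alpha beta : T -> R) (S1 S2 : {set {set T}}),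
    (forall r, 0 <= alpha r) /\ (forall r, 0 <= beta r) /\
    S1 != set0 /\ S2 != set0 /\ spe_ratio alpha beta w1 w2 S1 S2 x.

Definition net_ratio (R : realFieldType) (w1 w2 : R) (x : R) : Prop :=
  exists (V T : finType) (tail head : T -> V) (s1 t1 s2 t2 : V)
         (alpha beta : T -> R),
    (forall r, 0 <= alpha r) /\ (forall r, 0 <= beta r) /\
    path_sets tail head s1 t1 != set0 /\ path_sets tail head s2 t2 != set0 /\
    spe_ratio alpha beta w1 w2 (path_sets tail head s1 t1)
              (path_sets tail head s2 t2) x.

Definition is_sup (R : realFieldType) (P : R -> Prop) (rho : R) : Prop :=
  (forall x, P x -> x <= rho) /\
  (forall y, (forall x, P x -> x <= y) -> rho <= y).

Definition arc_of (n m : nat) (l : seq nat) (e : 'I_n) : 'I_m.+1 :=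
  inord (nth 0%N l e).

(* case (a): vertices a,b,c,d = 0,1,2,3; arcs
   0: a->c (w2), 1: b->d (w1+w2), 2: a->b (0), 3: b->c (w2), 4: c->d (0) *)
Definition tailA : 'I_5 -> 'I_4 := arc_of 3 [:: 0; 1; 0; 1; 2]%N.
Definition headA : 'I_5 -> 'I_4 := arc_of 3 [:: 2; 3; 1; 2; 3]%N.
Definition betaA (R : realFieldType) (w1 w2 : R) (e : 'I_5) : R :=
  nth 0 [:: w2; w1 + w2; 0; w2; 0] e.

(* case (b): vertices a,b,c,d,e = 0..4; arcs
   0: a->b (0), 1: b->c (w1 w2), 2: a->c (w1^2 + w1 w2), 3: c->d (w2^2),
   4: d->e (0), 5: c->e (0), 6: a->d ((w1+w2)^2) *)
Definition tailB : 'I_7 -> 'I_5 := arc_of 4 [:: 0; 1; 0; 2; 3; 2; 0]%N.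
Definition headB : 'I_7 -> 'I_5 := arc_of 4 [:: 1; 2; 2; 3; 4; 4; 3]%N.
Definition betaB (R : realFieldType) (w1 w2 : R) (e : 'I_7) : R :=
  nth 0 [:: 0; w1 * w2; w1 ^+ 2 + w1 * w2; w2 ^+ 2; 0; 0; (w1 + w2) ^+ 2] e.

(* case (c): vertices a,b,c = 0,1,2; arcs
   0: a->b (w2), 1: b->c (0), 2: a->c (w1+w2) *)
Definition tailC : 'I_3 -> 'I_3 := arc_of 2 [:: 0; 1; 0]%N.
Definition headC : 'I_3 -> 'I_3 := arc_of 2 [:: 1; 2; 2]%N.
Definition betaC (R : realFieldType) (w1 w2 : R) (e : 'I_3) : R :=
  nth 0 [:: w2; 0; w1 + w2] e.

Definition vtx (m k : nat) : 'I_m.+1 := inord k.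

From Pilot Require Import Defs.
From mathcomp Require Import all_boot all_order all_algebra.
From mathcomp Require Import ring lra.
Set Implicit Arguments. Unset Strict Implicit. Unset Printing Implicit Defensive.
Import Order.TTheory GRing.Theory Num.Theory.
Local Open Scope ring_scope.

(* Let (A1, A2) be a subgame-perfect outcome with strategy f of
   player 2, let (O1, O2) be optimal and B := f O1.  Then
     C1(A) <= C1(O1, B),  C2(A) <= C2(A1, O2),  C2(A) <= C2(A1, B),
     C2(O1, B) <= C2(O1, O2).
   If adding a nonnegative combination of these four inequalities to
   Q C(O) - P C(A) gives a nonnegative quantity resource by resource, then
   C(A) / C(O) <= Q / P.  The contribution of a resource is affine in its
   coefficients (alpha, beta) and depends only on its membership in A1, A2,
   O1, O2 and B, so this is a finite check at (alpha, beta) = (1, 0) and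
   (0, 1); each weight regime has its own multipliers.  In each of the three networks of the statement, an
   equilibrium that breaks ties against the optimum attains Q / P. *)

Section ResourceCost.
Variables (R : realFieldType) (w1 w2 : R).

Definition rcost1 (a b : R) (x1 x2 : bool) : R :=
  if x1 then a + b * (w1 + (if x2 then w2 else 0)) else 0.

Definition rcost2 (a b : R) (x1 x2 : bool) : R :=
  if x2 then a + b * ((if x1 then w1 else 0) + w2) else 0.

Lemma rcost1_affine a b x1 x2 :
  rcost1 a b x1 x2 = a * rcost1 1 0 x1 x2 + b * rcost1 0 1 x1 x2.
Proof. by rewrite /rcost1; case: x1; case: x2; ring. Qed.

Lemma rcost2_affine a b x1 x2 :
  rcost2 a b x1 x2 = a * rcost2 1 0 x1 x2 + b * rcost2 0 1 x1 x2.
Proof. by rewrite /rcost2; case: x1; case: x2; ring. Qed.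

(* The contribution of one resource with coefficients a, b which lies in
   A1, A2 iff x1, x2, in O1, O2 iff o1, o2 and in B iff y. *)
Definition spe_slack (P Q l1 mO mB nO a b : R) (x1 x2 o1 o2 y : bool) : R :=
  Q * (rcost1 a b o1 o2 + rcost2 a b o1 o2) - P * (rcost1 a b x1 x2 + rcost2 a b x1 x2)
  + l1 * (rcost1 a b x1 x2 - rcost1 a b o1 y)
  + mO * (rcost2 a b x1 x2 - rcost2 a b x1 o2)
  + mB * (rcost2 a b x1 x2 - rcost2 a b x1 y)
  + nO * (rcost2 a b o1 y - rcost2 a b o1 o2).

Lemma spe_slack_affine P Q l1 mO mB nO a b x1 x2 o1 o2 y :
  spe_slack P Q l1 mO mB nO a b x1 x2 o1 o2 y =
  a * spe_slack P Q l1 mO mB nO 1 0 x1 x2 o1 o2 y +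
  b * spe_slack P Q l1 mO mB nO 0 1 x1 x2 o1 o2 y.
Proof. by rewrite /spe_slack !(rcost1_affine a b) !(rcost2_affine a b); ring. Qed.

Definition poa_certificate (P Q l1 mO mB nO : R) : Prop :=
  [/\ 0 < P, 0 <= l1, 0 <= mO, 0 <= mB & 0 <= nO] /\
  forall x1 x2 o1 o2 y : bool,
    0 <= spe_slack P Q l1 mO mB nO 1 0 x1 x2 o1 o2 y /\
    0 <= spe_slack P Q l1 mO mB nO 0 1 x1 x2 o1 o2 y.

End ResourceCost.

Section SpeBound.
Variables (R : realFieldType) (T : finType) (alpha beta : T -> R) (w1 w2 : R).
Hypotheses (alpha_ge0 : forall r, 0 <= alpha r) (beta_ge0 : forall r, 0 <= beta r).

Local Notation cost1 := (cost1 alpha beta w1 w2).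
Local Notation cost2 := (cost2 alpha beta w1 w2).
Local Notation social_cost := (social_cost alpha beta w1 w2).

Lemma cost1E A1 A2 :
  cost1 A1 A2 = \sum_r rcost1 w1 w2 (alpha r) (beta r) (r \in A1) (r \in A2).
Proof.
by rewrite /Defs.cost1 big_mkcond; apply: eq_bigr => r _; rewrite /load; case: (r \in A1).
Qed.

Lemma cost2E A1 A2 :
  cost2 A1 A2 = \sum_r rcost2 w1 w2 (alpha r) (beta r) (r \in A1) (r \in A2).
Proof.
by rewrite /Defs.cost2 big_mkcond; apply: eq_bigr => r _; rewrite /load; case: (r \in A2).
Qed.

Lemma social_cost_le_certificate P Q l1 mO mB nO A1 A2 O1 O2 B :
  poa_certificate w1 w2 P Q l1 mO mB nO ->
  cost1 A1 A2 <= cost1 O1 B -> cost2 A1 A2 <= cost2 A1 O2 ->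
  cost2 A1 A2 <= cost2 A1 B -> cost2 O1 B <= cost2 O1 O2 ->
  P * social_cost A1 A2 <= Q * social_cost O1 O2.
Proof.
move=> [[_ l1_ge0 mO_ge0 mB_ge0 nO_ge0] cert] le1 le2 le3 le4.
have slack_ge0 : 0 <= \sum_r spe_slack w1 w2 P Q l1 mO mB nO (alpha r) (beta r)
    (r \in A1) (r \in A2) (r \in O1) (r \in O2) (r \in B).
  apply: sumr_ge0 => r _; rewrite spe_slack_affine.
  have [slack10 slack01] := cert (r \in A1) (r \in A2) (r \in O1) (r \in O2) (r \in B).
  by rewrite addr_ge0 ?mulr_ge0.
move: slack_ge0; rewrite /spe_slack !big_split /= sumrN -!mulr_sumr !big_split /= !sumrN.
rewrite -!cost1E -!cost2E /Defs.social_cost.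
have := ler_wpM2l l1_ge0 le1; have := ler_wpM2l mO_ge0 le2.
have := ler_wpM2l mB_ge0 le3; have := ler_wpM2l nO_ge0 le4.
lra.
Qed.

Lemma spe_ratio_le_certificate S1 S2 P Q l1 mO mB nO x :
  poa_certificate w1 w2 P Q l1 mO mB nO ->
  spe_ratio alpha beta w1 w2 S1 S2 x -> x <= Q / P.
Proof.
move=> cert [A1 [_ [v [[f [[br [A1_S1 best1]] ->]] [[[O1 O1_S1 [O2 O2_S2 <-]] _] [C_gt0 ->]]]]]].
have [fO1_S2 brO1] := br O1 O1_S1; have [_ brA1] := br A1 A1_S1.
have [[P_gt0 _ _ _ _] _] := cert.
rewrite ler_pdivrMr // mulrAC ler_pdivlMr // mulrC.
exact: social_cost_le_certificate cert (best1 _ O1_S1) (brA1 _ O2_S2) (brA1 _ fO1_S2)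
  (brO1 _ O2_S2).
Qed.

Lemma spe_ratio_action_sets_neq0 S1 S2 x :
  spe_ratio alpha beta w1 w2 S1 S2 x -> S1 != set0 /\ S2 != set0.
Proof.
move=> [A1 [_ [_ [[f [[br [A1_S1 _]] _]] _]]]]; have [fA1_S2 _] := br A1 A1_S1.
by split; apply/set0Pn; [exists A1 | exists (f A1)].
Qed.

End SpeBound.

Section Classes.
Variables (R : realFieldType) (w1 w2 : R).

Lemma cg_ratio_le_certificate P Q l1 mO mB nO x :
  poa_certificate w1 w2 P Q l1 mO mB nO -> cg_ratio w1 w2 x -> x <= Q / P.
Proof.
move=> cert [T [alpha [beta [S1 [S2 [alpha_ge0 [beta_ge0 [_ [_ spe_x]]]]]]]]].
exact (spe_ratio_le_certificate alpha_ge0 beta_ge0 cert spe_x).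
Qed.

Lemma cg_ratio_of_net_ratio x : net_ratio w1 w2 x -> cg_ratio w1 w2 x.
Proof.
move=> [V [T [tl [hd [s1 [t1 [s2 [t2 [alpha [beta [alpha_ge0 [beta_ge0 [S1_neq0 [S2_neq0 spe_x]]]]]]]]]]]]]].
by exists T, alpha, beta, (path_sets tl hd s1 t1), (path_sets tl hd s2 t2).
Qed.

Lemma net_ratio_of_spe_ratio (V T : finType) (tl hd : T -> V) s1 t1 s2 t2
    (alpha beta : T -> R) x :
  (forall r, 0 <= alpha r) -> (forall r, 0 <= beta r) ->
  spe_ratio alpha beta w1 w2 (path_sets tl hd s1 t1) (path_sets tl hd s2 t2) x ->
  net_ratio w1 w2 x.
Proof.
move=> alpha_ge0 beta_ge0 spe_x.
have [S1_neq0 S2_neq0] := spe_ratio_action_sets_neq0 spe_x.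
by exists V, T, tl, hd, s1, t1, s2, t2, alpha, beta.
Qed.

Lemma is_sup_classes rho :
  (forall x, cg_ratio w1 w2 x -> x <= rho) -> net_ratio w1 w2 rho ->
  is_sup (cg_ratio w1 w2) rho /\ is_sup (net_ratio w1 w2) rho.
Proof.
move=> cg_le net_rho; have cg_rho := cg_ratio_of_net_ratio net_rho.
split; split=> [x x_ratio | y y_ub]; try exact: y_ub.
- exact: cg_le.
- exact/cg_le/cg_ratio_of_net_ratio.
Qed.

End Classes.

Lemma poa_certificate_a (R : realFieldType) (w1 w2 : R) :
  0 <= w2 -> w2 <= w1 -> 0 < w1 + w2 ->
  poa_certificate w1 w2 (w1 + w2) (2 * w1 + w2) (2 * w1 + w2) w1 w2 (w1 + w2).
Proof.
move=> w2_ge0 w21 w_gt0; have w1_ge0 : 0 <= w1 by lra.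
have w1w2 := mulr_ge0 w1_ge0 w2_ge0.
have w1d : 0 <= w1 * (w1 - w2) by rewrite mulr_ge0 // subr_ge0.
have w2d : 0 <= w2 * (w1 - w2) by rewrite mulr_ge0 // subr_ge0.
split; first by split; lra.
by move=> [] [] [] [] []; rewrite /spe_slack /rcost1 /rcost2 /=; (split; [lra | nra]).
Qed.

Lemma poa_certificate_b (R : realFieldType) (w1 w2 : R) :
  0 < w1 -> w1 <= w2 -> w2 <= 2 * w1 ->
  let D := 2 * w1 ^+ 2 + w1 * w2 + w2 ^+ 2 in
  poa_certificate w1 w2 D (D + 2 * w1 * w2) (4 * w1 ^+ 2 + 2 * w1 * w2)
    ((2 * w1 - w2) * (w1 + w2)) (2 * w2 ^+ 2) (2 * w1 * w2 + 2 * w2 ^+ 2).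
Proof.
move=> w1_gt0 w12 w21 D; have w2_gt0 : 0 < w2 by lra.
have w1w1 := mulr_gt0 w1_gt0 w1_gt0; have w1w2 := mulr_gt0 w1_gt0 w2_gt0.
have w2w2 := mulr_gt0 w2_gt0 w2_gt0.
have w1d : 0 <= w1 * (w2 - w1) by rewrite mulr_ge0 ?subr_ge0 // ltW.
have w2d : 0 <= w2 * (w2 - w1) by rewrite mulr_ge0 ?subr_ge0 // ltW.
have w1e : 0 <= w1 * (2 * w1 - w2) by rewrite mulr_ge0 ?subr_ge0 // ltW.
have w2e : 0 <= w2 * (2 * w1 - w2) by rewrite mulr_ge0 ?subr_ge0 // ltW.
rewrite /D !expr2; split.
  by split; [lra | lra | rewrite mulr_ge0 //; lra | lra | lra].
by move=> [] [] [] [] []; rewrite /spe_slack /rcost1 /rcost2 /=; (split; [lra | nra]).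
Qed.

Lemma poa_certificate_c (R : realFieldType) (w1 w2 : R) :
  0 <= w1 -> 2 * w1 <= w2 -> 0 < w2 ->
  poa_certificate w1 w2 (2 * w1 + w2) (2 * (w1 + w2)) (2 * w1 + w2) 0
    (2 * w1 + w2) (2 * (w1 + w2)).
Proof.
move=> w1_ge0 w12 w2_gt0; have w2_ge0 := ltW w2_gt0.
have w1w2 := mulr_ge0 w1_ge0 w2_ge0.
have w1d : 0 <= w1 * (w2 - 2 * w1) by rewrite mulr_ge0 // subr_ge0.
have w2d : 0 <= w2 * (w2 - 2 * w1) by rewrite mulr_ge0 // subr_ge0.
split; first by split; lra.
by move=> [] [] [] [] []; rewrite /spe_slack /rcost1 /rcost2 /=; (split; [lra | nra]).
Qed.

Lemma poa_tight (R : realFieldType) (w1 w2 P Q l1 mO mB nO rho : R)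
    (V T : finType) (tl hd : T -> V) s1 t1 s2 t2 (alpha beta : T -> R) :
  poa_certificate w1 w2 P Q l1 mO mB nO -> Q / P = rho ->
  (forall r, 0 <= alpha r) -> (forall r, 0 <= beta r) ->
  spe_ratio alpha beta w1 w2 (path_sets tl hd s1 t1) (path_sets tl hd s2 t2) rho ->
  is_sup (cg_ratio w1 w2) rho /\ is_sup (net_ratio w1 w2) rho /\
  instance_poa alpha beta w1 w2 (path_sets tl hd s1 t1) (path_sets tl hd s2 t2) rho.
Proof.
move=> cert <- alpha_ge0 beta_ge0 spe_rho.
have [cg_sup net_sup] := is_sup_classes (fun x => cg_ratio_le_certificate cert)
  (net_ratio_of_spe_ratio alpha_ge0 beta_ge0 spe_rho).
do 2!split=> //; split=> // x.
exact (spe_ratio_le_certificate alpha_ge0 beta_ge0 cert).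
Qed.

Section Paths.
Variables (V T : finType) (tail head : T -> V).

Lemma eq_is_walk (tail' head' : T -> V) : tail =1 tail' -> head =1 head' ->
  forall s t p, is_walk tail head s t p = is_walk tail' head' s t p.
Proof.
by move=> eq_tail eq_head s t p; elim: p s => //= e p IHp s; rewrite eq_tail eq_head IHp.
Qed.

Lemma eq_path_sets (tail' head' : T -> V) : tail =1 tail' -> head =1 head' ->
  forall s t, path_sets tail head s t = path_sets tail' head' s t.
Proof.
move=> eq_tail eq_head s t; apply/setP => A; rewrite !inE.
apply: eq_existsb => p; apply: eq_existsb => k.
by rewrite /is_path (eq_is_walk eq_tail eq_head) (eq_map eq_head).
Qed.

Lemma path_size_le s t p : is_path tail head s t p -> (size p <= #|T|)%N.
Proof.
case/andP=> _ /= /andP [_ /map_uniq uniq_p].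
by rewrite -(card_uniqP uniq_p) max_card.
Qed.

Lemma path_in_path_sets s t p :
  is_path tail head s t p -> [set e in p] \in path_sets tail head s t.
Proof.
move=> path_p; have size_p := path_size_le path_p.
rewrite inE; apply/existsP.
pose l := take #|T| (p ++ enum T).
have size_l : size l == #|T|.
  by rewrite size_take_min size_cat -cardE (minn_idPl (leq_addl _ _)).
exists (Tuple size_l); apply/existsP; exists (inord (size p)).
by rewrite /= inordK ?ltnS // take_takel // take_size_cat // path_p eqxx.
Qed.

Variable arcs : seq T.
Hypothesis mem_arcs : forall e, e \in arcs.

Fixpoint walks (n : nat) (s t : V) : seq (seq T) :=
  (if s == t then [:: [::]] else [::]) ++
  if n is n'.+1 then
    flatten [seq [seq e :: p | p <- walks n' (head e) t] | e <- arcs & tail e == s]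
  else [::].

Lemma walks_complete n s t p :
  is_walk tail head s t p -> (size p <= n)%N -> p \in walks n s t.
Proof.
elim: n p s => [|n IHn] [|e p] s //=; rewrite mem_cat.
- by move/eqP->; rewrite eqxx mem_head.
- by move/eqP->; rewrite eqxx mem_head.
case/andP=> /eqP tail_e walk_p size_p; apply/orP; right.
apply/flatten_mapP; exists e; first by rewrite mem_filter tail_e eqxx mem_arcs.
exact/map_f/IHn.
Qed.

Definition paths n s t := [seq p <- walks n s t | is_path tail head s t p].

Lemma path_setsE s t :
  path_sets tail head s t = [set A | has (fun p => A == [set e in p]) (paths #|T| s t)].
Proof.
apply/setP => A; rewrite !inE.
apply/idP/hasP => [/existsP [p /existsP [k /andP [path_p /eqP ->]]] | [p]].
  exists (take k p) => //; rewrite mem_filter path_p walks_complete //.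
    by case/andP: path_p.
  exact: path_size_le path_p.
rewrite mem_filter => /andP [path_p _] /eqP ->.
by have := path_in_path_sets path_p; rewrite inE.
Qed.

End Paths.

(* [inord] goes through the opaque [idP] and is stuck under [vm_compute];
   [ord_mod] is the computable replacement used to enumerate paths. *)
Definition ord_mod (m k : nat) : 'I_m.+1 := Ordinal (ltn_pmod k (ltn0Sn m)).

Lemma inord_mod m k : (k <= m)%N -> inord k = ord_mod m k.
Proof. by move=> k_le_m; apply: val_inj; rewrite /= inordK ?modn_small. Qed.

Definition arc_mod n m (l : seq nat) (e : 'I_n) : 'I_m.+1 := ord_mod m (nth 0 l e).

Lemma arc_of_mod n m l : all (fun k => k <= m)%N l -> @arc_of n m l =1 arc_mod m l.
Proof.
move=> /allP l_le_m e; rewrite /arc_of inord_mod //.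
by have [/(mem_nth 0)/l_le_m | /(nth_default 0)->] := ltnP e (size l).
Qed.

Definition ords n : seq 'I_n.+1 := [seq ord_mod n k | k <- iota 0 n.+1].

Lemma mem_ords n (i : 'I_n.+1) : i \in ords n.
Proof.
have -> : i = ord_mod n i by apply: val_inj; rewrite /= modn_small.
by apply: map_f; rewrite mem_iota add0n ltn_ord.
Qed.

Lemma path_sets_ordE n m (lt lh : seq nat) s t :
  all (fun k => k <= m)%N lt -> all (fun k => k <= m)%N lh -> (s <= m)%N -> (t <= m)%N ->
  path_sets (@arc_of n.+1 m lt) (arc_of m lh) (vtx m s) (vtx m t) =
  [set A | has (fun p => A == [set e in p])
             (paths (arc_mod m lt) (arc_mod m lh) (ords n) n.+1 (ord_mod m s) (ord_mod m t))].
Proof.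
move=> lt_le lh_le s_le t_le.
rewrite (eq_path_sets (arc_of_mod lt_le) (arc_of_mod lh_le)) /vtx !inord_mod //.
by rewrite (path_setsE _ _ (@mem_ords n)) card_ord.
Qed.

Section SpeOfStrategies.
Variables (R : realFieldType) (T : finType) (alpha beta : T -> R) (w1 w2 : R).
Variables (S1 S2 : {set {set T}}).

Lemma spe_ratio_of_spe f A1 O1 O2 :
  is_spe alpha beta w1 w2 S1 S2 f A1 -> O1 \in S1 -> O2 \in S2 ->
  (forall B1 B2, B1 \in S1 -> B2 \in S2 ->
     social_cost alpha beta w1 w2 O1 O2 <= social_cost alpha beta w1 w2 B1 B2) ->
  0 < social_cost alpha beta w1 w2 O1 O2 ->
  spe_ratio alpha beta w1 w2 S1 S2
    (social_cost alpha beta w1 w2 A1 (f A1) / social_cost alpha beta w1 w2 O1 O2).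
Proof.
move=> spe_f O1_S1 O2_S2 opt C_gt0.
exists A1, (f A1), (social_cost alpha beta w1 w2 O1 O2); split; first by exists f.
by split=> //; split=> //; exists O1 => //; exists O2.
Qed.

End SpeOfStrategies.

Lemma big_set_seq (R : nmodType) (T : finType) (p : seq T) (F : T -> R) :
  uniq p -> \sum_(r in [set e in p]) F r = \sum_(r <- p) F r.
Proof. by move=> uniq_p; rewrite big_set big_uniq. Qed.

Ltac eval_costs :=
  rewrite /social_cost /cost1 /cost2 !big_set_seq // !big_cons !big_nil /load !in_set /=.

Lemma nth_ge0 (R : numDomainType) (s : seq R) i :
  all (fun x => 0 <= x) s -> 0 <= nth 0 s i.
Proof.
move=> /allP s_ge0.
by have [/(mem_nth 0)/s_ge0 | /(nth_default 0)->] := ltnP i (size s).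
Qed.

Local Notation arcA k := (@Ordinal 5 k isT).
Local Notation acA := [set e in [:: arcA 0]].
Local Notation abcA := [set e in [:: arcA 2; arcA 3]].
Local Notation bdA := [set e in [:: arcA 1]].
Local Notation bcdA := [set e in [:: arcA 3; arcA 4]].

Lemma path_sets_A1 : path_sets tailA headA (vtx 3 0) (vtx 3 2) = [set acA; abcA].
Proof.
rewrite /tailA /headA path_sets_ordE //.
rewrite (_ : paths _ _ _ _ _ _ = [:: [:: arcA 0]; [:: arcA 2; arcA 3]]);
  last by apply/eqP; vm_compute.
by apply/setP => A; rewrite !inE /= orbF.
Qed.

Lemma path_sets_A2 : path_sets tailA headA (vtx 3 1) (vtx 3 3) = [set bdA; bcdA].
Proof.
rewrite /tailA /headA path_sets_ordE //.
rewrite (_ : paths _ _ _ _ _ _ = [:: [:: arcA 1]; [:: arcA 3; arcA 4]]);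
  last by apply/eqP; vm_compute.
by apply/setP => A; rewrite !inE /= orbF.
Qed.

Lemma betaA_ge0 (R : realFieldType) (w1 w2 : R) :
  0 <= w1 -> 0 <= w2 -> forall e, 0 <= betaA w1 w2 e.
Proof. by move=> w1_ge0 w2_ge0 e; apply: nth_ge0; rewrite /= w2_ge0 addr_ge0 ?lexx. Qed.

Lemma spe_ratio_A (R : realFieldType) (w1 w2 : R) : 0 < w2 -> w2 <= w1 ->
  spe_ratio (fun _ => 0) (betaA w1 w2) w1 w2
    (path_sets tailA headA (vtx 3 0) (vtx 3 2)) (path_sets tailA headA (vtx 3 1) (vtx 3 3))
    (1 + w1 / (w1 + w2)).
Proof.
move=> w2_gt0 w21; have w1_gt0 := lt_le_trans w2_gt0 w21.
have w1w2 := mulr_gt0 w1_gt0 w2_gt0; have w2w2 := mulr_gt0 w2_gt0 w2_gt0.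
rewrite path_sets_A1 path_sets_A2.
pose f (A1 : {set 'I_5}) := if arcA 0 \in A1 then bcdA else bdA.
have f_ac : f acA = bcdA by rewrite /f inE.
have f_abc : f abcA = bdA by rewrite /f inE.
have -> : 1 + w1 / (w1 + w2) =
    social_cost (fun _ => 0) (betaA w1 w2) w1 w2 abcA (f abcA) /
    social_cost (fun _ => 0) (betaA w1 w2) w1 w2 acA bcdA.
  rewrite f_abc /betaA; eval_costs.
  by field; apply/andP; split; apply: lt0r_neq0; lra.
rewrite /betaA; apply: spe_ratio_of_spe; rewrite ?inE ?eqxx ?orbT //.
- split; [|split; first by rewrite !inE eqxx orbT].
    move=> B1 /set2P [] ->; rewrite ?f_ac ?f_abc.
      split; first by rewrite !inE eqxx orbT.
      by move=> B2 /set2P [] ->; eval_costs; lra.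
    split; first by rewrite !inE eqxx.
    by move=> B2 /set2P [] ->; eval_costs; lra.
  by move=> B1 /set2P [] ->; rewrite ?f_ac ?f_abc; eval_costs; lra.
- by move=> B1 B2 /set2P [] -> /set2P [] ->; eval_costs; lra.
- by eval_costs; lra.
Qed.

(* For w2 = 0 the network of case (a) has optimal cost 0 under betaA; this
   variant of it, with positive alpha, attains the bound 2. *)
Definition alphaA0 (R : realFieldType) (w1 : R) (e : 'I_5) : R := nth 0 [:: 0; w1; 0; 0; 0] e.
Definition betaA0 (R : realFieldType) (e : 'I_5) : R := nth 0 [:: 1; 0; 0; 1; 0] e.

Lemma alphaA0_ge0 (R : realFieldType) (w1 : R) : 0 <= w1 -> forall e, 0 <= alphaA0 w1 e.
Proof. by move=> w1_ge0 e; apply: nth_ge0; rewrite /= w1_ge0 lexx. Qed.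

Lemma betaA0_ge0 (R : realFieldType) (e : 'I_5) : 0 <= betaA0 R e.
Proof. by apply: nth_ge0; rewrite /= ler01 lexx. Qed.

Lemma spe_ratio_A0 (R : realFieldType) (w1 : R) : 0 < w1 ->
  spe_ratio (alphaA0 w1) (@betaA0 R) w1 0
    (path_sets tailA headA (vtx 3 0) (vtx 3 2)) (path_sets tailA headA (vtx 3 1) (vtx 3 3)) 2.
Proof.
move=> w1_gt0; rewrite path_sets_A1 path_sets_A2.
have -> : 2 = social_cost (alphaA0 w1) (@betaA0 R) w1 0 abcA bcdA /
              social_cost (alphaA0 w1) (@betaA0 R) w1 0 acA bcdA.
  rewrite /alphaA0 /betaA0; eval_costs.
  by field; apply: lt0r_neq0; lra.
rewrite /alphaA0 /betaA0; apply: (spe_ratio_of_spe (f := fun _ => bcdA));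
  rewrite ?inE ?eqxx ?orbT //.
- split; [|split; first by rewrite !inE eqxx orbT].
    move=> B1 /set2P [] ->; (split; first by rewrite !inE eqxx orbT);
      by move=> B2 /set2P [] ->; eval_costs; lra.
  by move=> B1 /set2P [] ->; eval_costs; lra.
- by move=> B1 B2 /set2P [] -> /set2P [] ->; eval_costs; lra.
- by eval_costs; lra.
Qed.

Local Notation arcB k := (@Ordinal 7 k isT).
Local Notation bceB := [set e in [:: arcB 1; arcB 5]].
Local Notation bcdeB := [set e in [:: arcB 1; arcB 3; arcB 4]].
Local Notation abcdB := [set e in [:: arcB 0; arcB 1; arcB 3]].
Local Notation acdB := [set e in [:: arcB 2; arcB 3]].
Local Notation adB := [set e in [:: arcB 6]].

Lemma path_sets_B1 : path_sets tailB headB (vtx 4 1) (vtx 4 4) = [set bcdeB; bceB].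
Proof.
rewrite /tailB /headB path_sets_ordE //.
rewrite (_ : paths _ _ _ _ _ _ = [:: [:: arcB 1; arcB 3; arcB 4]; [:: arcB 1; arcB 5]]);
  last by apply/eqP; vm_compute.
by apply/setP => A; rewrite !inE /= orbF.
Qed.

Lemma path_sets_B2 : path_sets tailB headB (vtx 4 0) (vtx 4 3) = abcdB |: [set acdB; adB].
Proof.
rewrite /tailB /headB path_sets_ordE //.
rewrite (_ : paths _ _ _ _ _ _ =
    [:: [:: arcB 0; arcB 1; arcB 3]; [:: arcB 2; arcB 3]; [:: arcB 6]]);
  last by apply/eqP; vm_compute.
by apply/setP => A; rewrite !inE /= orbF.
Qed.

Lemma betaB_ge0 (R : realFieldType) (w1 w2 : R) :
  0 <= w1 -> 0 <= w2 -> forall e, 0 <= betaB w1 w2 e.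
Proof.
move=> w1_ge0 w2_ge0 e; apply: nth_ge0.
by rewrite /= !addr_ge0 ?mulr_ge0 ?exprn_ge0 ?addr_ge0 ?lexx.
Qed.

Lemma spe_ratio_B (R : realFieldType) (w1 w2 : R) : 0 < w1 -> 0 < w2 ->
  spe_ratio (fun _ => 0) (betaB w1 w2) w1 w2
    (path_sets tailB headB (vtx 4 1) (vtx 4 4)) (path_sets tailB headB (vtx 4 0) (vtx 4 3))
    (1 + 2 * w1 * w2 / (2 * w1 ^+ 2 + w1 * w2 + w2 ^+ 2)).
Proof.
move=> w1_gt0 w2_gt0.
have w1w2 := mulr_gt0 w1_gt0 w2_gt0; have w1w1 := mulr_gt0 w1_gt0 w1_gt0.
have w2w2 := mulr_gt0 w2_gt0 w2_gt0; have w1w2w2 := mulr_gt0 w1w2 w2_gt0.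
have w1w1w2 := mulr_gt0 w1w1 w2_gt0; have w2w2w2 := mulr_gt0 w2w2 w2_gt0.
have w1w1w1 := mulr_gt0 w1w1 w1_gt0.
rewrite path_sets_B1 path_sets_B2.
pose f (A1 : {set 'I_7}) := if arcB 5 \in A1 then abcdB else adB.
have f_bce : f bceB = abcdB by rewrite /f inE.
have f_bcde : f bcdeB = adB by rewrite /f inE.
have -> : 1 + 2 * w1 * w2 / (2 * w1 ^+ 2 + w1 * w2 + w2 ^+ 2) =
    social_cost (fun _ => 0) (betaB w1 w2) w1 w2 bcdeB (f bcdeB) /
    social_cost (fun _ => 0) (betaB w1 w2) w1 w2 bceB acdB.
  rewrite f_bcde /betaB; eval_costs.
  by field; apply/andP; split; apply: lt0r_neq0; nra.
rewrite /betaB; apply: spe_ratio_of_spe; rewrite ?inE ?eqxx ?orbT //.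
- split; [|split; first by rewrite !inE eqxx].
    move=> B1 /set2P [] ->; rewrite ?f_bce ?f_bcde.
      split; first by rewrite !inE eqxx ?orbT.
      by move=> B2 /setU1P [-> | /set2P [] ->]; eval_costs; lra.
    split; first by rewrite !inE eqxx ?orbT.
    by move=> B2 /setU1P [-> | /set2P [] ->]; eval_costs; lra.
  by move=> B1 /set2P [] ->; rewrite ?f_bce ?f_bcde; eval_costs; lra.
- by move=> B1 B2 /set2P [] -> /setU1P [-> | /set2P [] ->]; eval_costs; lra.
- by eval_costs; lra.
Qed.

Local Notation arcC k := (@Ordinal 3 k isT).
Local Notation abC := [set e in [:: arcC 0]].
Local Notation abcC := [set e in [:: arcC 0; arcC 1]].
Local Notation acC := [set e in [:: arcC 2]].

Lemma path_sets_C1 : path_sets tailC headC (vtx 2 0) (vtx 2 1) = [set abC].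
Proof.
rewrite /tailC /headC path_sets_ordE //.
rewrite (_ : paths _ _ _ _ _ _ = [:: [:: arcC 0]]); last by apply/eqP; vm_compute.
by apply/setP => A; rewrite !inE /= orbF.
Qed.

Lemma path_sets_C2 : path_sets tailC headC (vtx 2 0) (vtx 2 2) = [set abcC; acC].
Proof.
rewrite /tailC /headC path_sets_ordE //.
rewrite (_ : paths _ _ _ _ _ _ = [:: [:: arcC 0; arcC 1]; [:: arcC 2]]);
  last by apply/eqP; vm_compute.
by apply/setP => A; rewrite !inE /= orbF.
Qed.

Lemma betaC_ge0 (R : realFieldType) (w1 w2 : R) :
  0 <= w1 -> 0 <= w2 -> forall e, 0 <= betaC w1 w2 e.
Proof. by move=> w1_ge0 w2_ge0 e; apply: nth_ge0; rewrite /= w2_ge0 addr_ge0 ?lexx. Qed.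

Lemma spe_ratio_C (R : realFieldType) (w1 w2 : R) : 0 <= w1 -> 0 < w2 ->
  spe_ratio (fun _ => 0) (betaC w1 w2) w1 w2
    (path_sets tailC headC (vtx 2 0) (vtx 2 1)) (path_sets tailC headC (vtx 2 0) (vtx 2 2))
    (1 + w2 / (2 * w1 + w2)).
Proof.
move=> w1_ge0 w2_gt0.
have w1w2 := mulr_ge0 w1_ge0 (ltW w2_gt0); have w2w2 := mulr_gt0 w2_gt0 w2_gt0.
rewrite path_sets_C1 path_sets_C2.
have -> : 1 + w2 / (2 * w1 + w2) =
    social_cost (fun _ => 0) (betaC w1 w2) w1 w2 abC abcC /
    social_cost (fun _ => 0) (betaC w1 w2) w1 w2 abC acC.
  rewrite /betaC; eval_costs.
  by field; apply/andP; split; apply: lt0r_neq0; nra.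
rewrite /betaC; apply: (spe_ratio_of_spe (f := fun _ => abcC)); rewrite ?inE ?eqxx ?orbT //.
- split; [|split; first by rewrite !inE eqxx].
    move=> B1 /set1P ->; split; first by rewrite !inE eqxx.
    by move=> B2 /set2P [] ->; eval_costs; lra.
  by move=> B1 /set1P ->.
- by move=> B1 B2 /set1P -> /set2P [] ->; eval_costs; lra.
- by eval_costs; lra.
Qed.

Theorem theorem6 (R : realFieldType) (w1 w2 : R) :
  0 <= w1 -> 0 <= w2 -> 0 < w1 + w2 ->
  (* case (a) *)
  (w2 <= w1 ->
     is_sup (cg_ratio w1 w2) (1 + w1 / (w1 + w2)) /\
     is_sup (net_ratio w1 w2) (1 + w1 / (w1 + w2)) /\
     (0 < w2 ->
      instance_poa (fun _ => 0) (betaA w1 w2) w1 w2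
        (path_sets tailA headA (vtx 3 0) (vtx 3 2))
        (path_sets tailA headA (vtx 3 1) (vtx 3 3))
        (1 + w1 / (w1 + w2)))) /\
  (* case (b) *)
  (w1 <= w2 <= 2 * w1 ->
     let rho := 1 + 2 * w1 * w2 / (2 * w1 ^+ 2 + w1 * w2 + w2 ^+ 2) in
     is_sup (cg_ratio w1 w2) rho /\
     is_sup (net_ratio w1 w2) rho /\
     instance_poa (fun _ => 0) (betaB w1 w2) w1 w2
       (path_sets tailB headB (vtx 4 1) (vtx 4 4))
       (path_sets tailB headB (vtx 4 0) (vtx 4 3))
       rho) /\
  (* case (c) *)
  (2 * w1 <= w2 ->
     is_sup (cg_ratio w1 w2) (1 + w2 / (2 * w1 + w2)) /\
     is_sup (net_ratio w1 w2) (1 + w2 / (2 * w1 + w2)) /\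
     instance_poa (fun _ => 0) (betaC w1 w2) w1 w2
       (path_sets tailC headC (vtx 2 0) (vtx 2 1))
       (path_sets tailC headC (vtx 2 0) (vtx 2 2))
       (1 + w2 / (2 * w1 + w2))).
Proof.
move=> w1_ge0 w2_ge0 w_gt0; split; [|split].
- move=> w21; have cert := poa_certificate_a w2_ge0 w21 w_gt0.
  move: w2_ge0; rewrite le_eqVlt => /predU1P [w2_0 | w2_gt0].
    subst w2; rewrite addr0 in w_gt0.
    have rhoE : (2 * w1 + 0) / (w1 + 0) = 2 by rewrite !addr0; field; exact: lt0r_neq0.
    have [cg_sup [net_sup _]] := poa_tight cert rhoE (alphaA0_ge0 w1_ge0) (@betaA0_ge0 R)
      (spe_ratio_A0 w_gt0).
    rewrite (_ : 1 + w1 / (w1 + 0) = 2); last by rewrite addr0; field; exact: lt0r_neq0.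
    by do 2!split=> //; rewrite ltxx.
  have rhoE : (2 * w1 + w2) / (w1 + w2) = 1 + w1 / (w1 + w2) by field; exact: lt0r_neq0.
  have [cg_sup [net_sup inst]] := poa_tight cert rhoE (fun=> lexx 0)
    (betaA_ge0 w1_ge0 (ltW w2_gt0)) (spe_ratio_A w2_gt0 w21).
  by do 2!split=> //.
- move=> /andP [w12 w21] rho; have w1_gt0 : 0 < w1 by lra.
  have w2_gt0 := lt_le_trans w1_gt0 w12.
  apply: poa_tight (poa_certificate_b w1_gt0 w12 w21) _ (fun=> lexx 0)
    (betaB_ge0 w1_ge0 w2_ge0) (spe_ratio_B w1_gt0 w2_gt0).
  rewrite /rho; field.
  by rewrite lt0r_neq0 // !addr_gt0 ?mulr_gt0 ?exprn_gt0.
- move=> w12; have w2_gt0 : 0 < w2 by lra.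
  apply: poa_tight (poa_certificate_c w1_ge0 w12 w2_gt0) _ (fun=> lexx 0)
    (betaC_ge0 w1_ge0 w2_ge0) (spe_ratio_C w1_ge0 w2_gt0).
  by field; apply: lt0r_neq0; lra.
Qed.
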